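(* There exists an absolute constant $C$ such that for every integer $k\geq 1$, every $k$-nearest-neighbour graph of a finite point set in $\mathbb{R}^2$, drawn with straight-line edges, has every edge involved in at most $Ck^2$ crossings; in particular every $k$-nearest-neighbour graph is $Ck^2$-planar.
   Context: For a finite set $P\subset\mathbb{R}^2$ and $v\in P$, let $N_k(v)$ be the set of $k$ points of $P\setminus\{v\}$ closest to $v$ in Euclidean distance. The $k$-nearest-neighbour graph of $P$ is the geometric graph with vertex set $P$ in which $vw$ is an edge iff $w\in N_k(v)$ or $v\in N_k(w)$, edges being the straight-line segments between their endpoints. A graph is $m$-planar if it has a drawing in the plane in which each edge is involved in at most $m$ crossings. *)

From HB Require Import structures.
From mathcomp Require Import all_boot all_order all_algebra.
From mathcomp Require Import finmap.
From mathcomp Require Import reals.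
Set Implicit Arguments. Unset Strict Implicit. Unset Printing Implicit Defensive.
Import Order.TTheory GRing.Theory Num.Theory.
Local Open Scope ring_scope.


Definition pt (R : realType) := (R * R)%type.

(* Squared Euclidean distance (comparing squared distances = comparing distances). *)
Definition sqdist (R : realType) (p q : pt R) : R :=
  ((fst p) - (fst q)) ^+ 2 + ((snd p) - (snd q)) ^+ 2.

(* N is a valid choice of k-nearest-neighbour sets for the finite point set P:
   N v is a set of min(k, |P|-1) points of P \ {v}, and every point of N v is
   at least as close to v as every point of P \ {v} not in N v.
   (Ties are broken arbitrarily; the theorem quantifies over all choices.) *)
Definition knn_choice (R : realType) (k : nat) (P : {fset pt R})
    (N : pt R -> {fset pt R}) : Prop :=
  forall v, v \in P ->
    [/\ (N v `<=` P `\ v)%fset,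
        #|` N v| = minn k (#|` P| - 1)%N
      & forall w u, w \in N v -> u \in (P `\ v)%fset -> u \notin N v ->
          sqdist v w <= sqdist v u].

Definition knn_edge (R : realType) (P : {fset pt R}) (N : pt R -> {fset pt R})
    (v w : pt R) : Prop :=
  [/\ v \in P, w \in P & (w \in N v) || (v \in N w)].

Definition on_seg (R : realType) (p q x : pt R) : Prop :=
  exists t : R, [/\ 0 <= t, t <= 1,
    (fst x) = (fst p) + t * ((fst q) - (fst p)) & (snd x) = (snd p) + t * ((snd q) - (snd p))].

Definition seg_cross (R : realType) (a b c d : pt R) : Prop :=
  [/\ a != c, a != d, b != c, b != d &
      exists x, on_seg a b x /\ on_seg c d x].

(* If the segments ab and cd cross, a suitable convex combination of the four
   dot products (a - c).(b - c), (a - d).(b - d), (c - a).(d - a), (c - b).(d - b)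
   vanishes, so one endpoint sees the opposite segment under a non-acute angle
   and is therefore strictly closer to both of its ends than they are to each
   other.  For oriented edges b in N a, d in N c this forces c or d into N a, or
   a or b into N c.  Moreover every point v lies in at most 8k neighbourhoods:
   in each of the eight 45-degree cones at v, the point c farthest from v with
   v in N c is closer to every other such point than to v, so N c contains v and
   all of them.  Counting oriented edges cd with c in N a or with v in N c for
   v in {a, b}, together with those with d in N a, gives at most
   17k * k + k * 8k = 25k^2 crossing edges. *)

From HB Require Import structures.
From mathcomp Require Import all_boot all_order all_algebra.
From mathcomp Require Import finmap.
From mathcomp Require Import reals.
From mathcomp Require Import ring lra zify.
Import Order.TTheory GRing.Theory Num.Theory.
Set Implicit Arguments. Unset Strict Implicit. Unset Printing Implicit Defensive.
Local Open Scope ring_scope.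

Section PlaneGeometry.
Variable R : realType.
Implicit Types (o p q a b c d x u w : pt R).

Definition vsub p q : pt R := (p.1 - q.1, p.2 - q.2).
Definition vdot u w : R := u.1 * w.1 + u.2 * w.2.
Definition dot_at o p q : R := vdot (vsub p o) (vsub q o).

Lemma sqdistC p q : sqdist p q = sqdist q p.
Proof. rewrite /sqdist; ring. Qed.

Lemma dot_atC o p q : dot_at o p q = dot_at o q p.
Proof. by rewrite /dot_at /vdot mulrC [X in _ + X]mulrC. Qed.

Lemma sqdist_dot_at o p : sqdist o p = dot_at o p p.
Proof. rewrite /sqdist /dot_at /vdot /=; ring. Qed.

Lemma sqdist_cosine o p q :
  sqdist p q = sqdist o p + sqdist o q - 2 * dot_at o p q.
Proof. rewrite /sqdist /dot_at /vdot /=; ring. Qed.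

Lemma sqdist_gt0 p q : p != q -> 0 < sqdist p q.
Proof.
case: p q => [p1 p2] [q1 q2] neq; rewrite /sqdist /=.
have [e1|ne1] := eqVneq p1 q1; last first.
  by rewrite ltr_pwDl ?sqr_ge0 // exprn_even_gt0 // subr_eq0.
have [e2|ne2] := eqVneq p2 q2; first by rewrite e1 e2 eqxx in neq.
by rewrite ltr_pwDr ?sqr_ge0 // exprn_even_gt0 // subr_eq0.
Qed.

Lemma dot_at_le0_sqdist_lt o p q :
  dot_at o p q <= 0 -> q != o -> sqdist p o < sqdist p q.
Proof.
move=> obtuse qo; rewrite (sqdist_cosine o p q) (sqdistC p o).
have := sqdist_gt0 qo; rewrite sqdistC; lra.
Qed.

Lemma on_segC p q x : on_seg p q x -> on_seg q p x.
Proof. by case=> t [t0 t1 e1 e2]; exists (1 - t); split; rewrite ?e1 ?e2; lra. Qed.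

Lemma seg_crossCl a b c d : seg_cross a b c d -> seg_cross b a c d.
Proof. by case=> ? ? ? ? [x [abx cdx]]; split=> //; exists x; split=> //; apply: on_segC. Qed.

Lemma seg_crossCr a b c d : seg_cross a b c d -> seg_cross a b d c.
Proof. by case=> ? ? ? ? [x [abx cdx]]; split=> //; exists x; split=> //; apply: on_segC. Qed.

Lemma on_seg_crossing_nonacute a b c d x : on_seg a b x -> on_seg c d x ->
  [\/ dot_at c a b <= 0, dot_at d a b <= 0, dot_at a c d <= 0 | dot_at b c d <= 0].
Proof.
case=> t [t0 t1 e1 e2] [u [u0 u1 e3 e4]].
(* Both factors vanish: the second one is the difference of the two
   parametrisations of the crossing point. *)
have weighted_sum : (1 - u) * dot_at c a b + u * dot_at d a b
                  + (1 - t) * dot_at a c d + t * dot_at b c d = 0.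
  transitivity ((a.1 + b.1 - c.1 - d.1) * (a.1 + t * (b.1 - a.1) - (c.1 + u * (d.1 - c.1)))
              + (a.2 + b.2 - c.2 - d.2) * (a.2 + t * (b.2 - a.2) - (c.2 + u * (d.2 - c.2)))).
    by rewrite /dot_at /vdot /=; ring.
  by rewrite -e1 -e2 -e3 -e4 !subrr !mulr0 addr0.
have [|cab] := lerP (dot_at c a b) 0; first by constructor 1.
have [|dab] := lerP (dot_at d a b) 0; first by constructor 2.
have [|acd] := lerP (dot_at a c d) 0; first by constructor 3.
have [|bcd] := lerP (dot_at b c d) 0; first by constructor 4.
have : 0 < (1 - u) * dot_at c a b + u * dot_at d a b by nra.
have : 0 <= (1 - t) * dot_at a c d + t * dot_at b c d by nra.
lra.
Qed.

Definition first_octant u : bool := 0 <= u.2 <= u.1.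

Definition square_sym (s : bool * bool * bool) u : pt R :=
  let: (sx, sy, swap) := s in
  let x := if sx then - u.1 else u.1 in
  let y := if sy then - u.2 else u.2 in
  if swap then (y, x) else (x, y).

Lemma vdot_square_sym s u w : vdot (square_sym s u) (square_sym s w) = vdot u w.
Proof. by case: s => [[[] []] []]; rewrite /vdot /=; ring. Qed.

Lemma first_octant_dot u w : first_octant u -> first_octant w ->
  0 < vdot u u -> vdot u u <= vdot w w -> vdot u u < 2 * vdot u w.
Proof.
case: u w => [u1 u2] [w1 w2]; rewrite /first_octant /vdot /=.
move=> /andP[u2_ge0 u21] /andP[w2_ge0 w21] u_gt0 uw.
have uw_ge0 : 0 <= u1 * w1 + u2 * w2 by nra.
have angle : (u1 * u1 + u2 * u2) * (w1 * w1 + w2 * w2) <= 2 * (u1 * w1 + u2 * w2) ^+ 2.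
  rewrite -subr_ge0 (_ : _ - _ = (u1 ^+ 2 - u2 ^+ 2) * (w1 ^+ 2 - w2 ^+ 2)
                                 + 4 * (u1 * u2) * (w1 * w2)); last by ring.
  by rewrite addr_ge0 // !mulr_ge0 //; nra.
(* (2 u.w)^2 >= 2 |u|^2 |w|^2 >= 2 |u|^4 > |u|^4 *)
nra.
Qed.

Definition in_octant s o p : bool := first_octant (square_sym s (vsub p o)).

Lemma in_octant_cover o p : exists s, in_octant s o p.
Proof.
rewrite /in_octant; move: (vsub p o) => u.
have absE (z : R) : (if z < 0 then - z else z) = `|z|.
  by case: ltrP => [/ltr0_norm|/ger0_norm].
exists (u.1 < 0, u.2 < 0, `|u.1| < `|u.2|); rewrite /square_sym !absE.
by case: ltrP => [/ltW|] le; rewrite /first_octant /= normr_ge0 le.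
Qed.

Lemma in_octant_closer s o p q : in_octant s o p -> in_octant s o q ->
  q != o -> sqdist o q <= sqdist o p -> sqdist p q < sqdist p o.
Proof.
move=> op oq qo le_qp.
have := first_octant_dot oq op; rewrite !vdot_square_sym.
rewrite -/(dot_at o q q) -/(dot_at o p p) -/(dot_at o q p) -!sqdist_dot_at dot_atC.
rewrite (sqdist_cosine o p q) (sqdistC p o).
have := sqdist_gt0 qo; rewrite sqdistC; lra.
Qed.

End PlaneGeometry.

Lemma seq_argmax (T : eqType) d (O : orderType d) (f : T -> O) (s : seq T) :
  s != [::] -> exists2 x, x \in s & forall y, y \in s -> (f y <= f x)%O.
Proof.
elim: s => // z [|w s] IH _.
  by exists z; rewrite ?mem_head // => y; rewrite inE => /eqP->.
have [m ms max_m] := IH isT.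
have [le_zm|le_mz] := leP (f z) (f m).
  by exists m => [|y]; rewrite in_cons ?ms ?orbT // => /predU1P[->|/max_m].
exists z => [|y]; rewrite ?mem_head // in_cons => /predU1P[->//|/max_m].
by move/le_trans; apply; apply: ltW.
Qed.

Lemma size_le_sum_count (T : eqType) (I : finType) (q : I -> pred T) (s : seq T) :
  {in s, forall x, exists i, q i x} -> (size s <= \sum_(i : I) count (q i) s)%N.
Proof.
elim: s => //= x s IH cover; rewrite big_split /= -add1n leq_add //.
  have [i qix] := cover x (mem_head x s).
  by rewrite (bigD1 i) //= qix.
by apply: IH => y ys; apply: cover; rewrite inE ys orbT.
Qed.

Lemma size_allpairs_dep_le (S : eqType) (T U : Type) (f : S -> T -> U)
    (s : seq S) (t : S -> seq T) m :
  {in s, forall x, size (t x) <= m}%N ->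
  (size [seq f x y | x <- s, y <- t x] <= size s * m)%N.
Proof.
rewrite size_allpairs_dep; elim: s => //= x s IH le_t.
by rewrite mulSn leq_add ?le_t ?mem_head // IH // => y ys; rewrite le_t // inE ys orbT.
Qed.

Section KnnGraph.
Variables (R : realType) (k : nat) (P : {fset pt R}) (N : pt R -> {fset pt R}).
Hypothesis knnN : knn_choice k P N.

Lemma knn_mem v w : v \in P -> w \in N v -> w \in P /\ w != v.
Proof.
move=> vP wN; have [/fsubsetP sub _ _] := knnN vP.
by have := sub w wN; rewrite in_fsetD1 => /andP[-> ->].
Qed.

Lemma card_knn_le v : v \in P -> (#|` N v| <= k)%N.
Proof. by move=> vP; have [_ -> _] := knnN vP; apply: geq_minl. Qed.

Lemma knn_closer v w u : v \in P -> w \in N v -> u \in P -> u != v ->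
  sqdist v u < sqdist v w -> u \in N v.
Proof.
move=> vP wN uP uv; apply: contraLR => uN; rewrite -leNgt.
by have [_ _ ->] := knnN vP; rewrite // in_fsetD1 uv uP.
Qed.

Lemma seg_cross_knn a b c d : a \in P -> b \in N a -> c \in P -> d \in N c ->
  seg_cross a b c d -> [|| c \in N a, d \in N a, a \in N c | b \in N c].
Proof.
move=> aP bN cP dN [ac ad bc bd [x [abx cdx]]].
have [bP _] := knn_mem aP bN; have [dP _] := knn_mem cP dN.
case: (on_seg_crossing_nonacute abx cdx) => /dot_at_le0_sqdist_lt obtuse; apply/or4P.
- by constructor 1; apply: knn_closer aP bN cP _ (obtuse bc); rewrite eq_sym.
- by constructor 2; apply: knn_closer aP bN dP _ (obtuse bd); rewrite eq_sym.
- by constructor 3; apply: knn_closer cP dN aP ac (obtuse _); rewrite eq_sym.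
- by constructor 4; apply: knn_closer cP dN bP bc (obtuse _); rewrite eq_sym.
Qed.

Definition in_knn v : seq (pt R) := [seq c <- P | v \in N c].

Lemma in_knn_octant_le s v : (count (in_octant s v) (in_knn v) <= k)%N.
Proof.
rewrite -size_filter; set Q := filter _ _.
have uQ : uniq Q by apply/filter_uniq/filter_uniq/fset_uniq.
have [Q0|Q0] := eqVneq Q [::]; first by rewrite Q0.
have [c Qc farthest] := seq_argmax (fun c => sqdist v c) Q0.
move: (Qc); rewrite !mem_filter => /andP[oc /andP[vNc cP]].
have sub : {subset v :: rem c Q <= N c}.
  move=> y; rewrite in_cons => /predU1P[->//|].
  rewrite (mem_rem_uniq _ uQ) inE => /andP[yc Qy].
  move: (Qy); rewrite !mem_filter => /andP[oy /andP[vNy yP]].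
  have [_] := knn_mem yP vNy; rewrite eq_sym => yv.
  exact: knn_closer cP vNc yP yc (in_octant_closer oc oy yv (farthest y Qy)).
have vQ : v \notin Q.
  rewrite !mem_filter; apply/negP => /and3P[_ vNv vP].
  by have [_] := knn_mem vP vNv; rewrite eqxx.
have uvQ : uniq (v :: rem c Q).
  by rewrite /= rem_uniq // andbT; apply: contra vQ; apply: mem_rem.
have := uniq_leq_size uvQ sub; rewrite /= size_rem // prednK ?lt0n ?size_eq0 // => le_Q.
exact: leq_trans le_Q (card_knn_le cP).
Qed.

Lemma size_in_knn_le v : (size (in_knn v) <= 8 * k)%N.
Proof.
have := @size_le_sum_count _ _ (fun s => in_octant s v) (in_knn v)
  (fun c _ => in_octant_cover v c).
move/leq_trans; apply.
apply: (@leq_trans (\sum_(s : bool * bool * bool) k)).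
  by apply: leq_sum => s _; apply: in_knn_octant_le.
by rewrite sum_nat_const !card_prod !card_bool.
Qed.

Definition crossing_candidates a b : seq (pt R * pt R) :=
  [seq (c, d) | c <- (N a : seq _) ++ in_knn a ++ in_knn b, d <- N c]
  ++ [seq (c, d) | d <- N a, c <- in_knn d].

Lemma crossing_candidatesP a b c d : a \in P -> b \in N a -> c \in P -> d \in N c ->
  seg_cross a b c d -> (c, d) \in crossing_candidates a b.
Proof.
move=> aP bN cP dN abcd; rewrite mem_cat.
have in_knnE v : (c \in in_knn v) = (v \in N c) by rewrite mem_filter cP andbT.
case/or4P: (seg_cross_knn aP bN cP dN abcd) => [cNa|dNa|aNc|bNc].
- by rewrite allpairs_f_dep // mem_cat cNa.
- by rewrite orbC allpairs_f_dep // in_knnE.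
- by rewrite allpairs_f_dep // !mem_cat in_knnE aNc orbT.
- by rewrite allpairs_f_dep // !mem_cat !in_knnE bNc !orbT.
Qed.

Lemma size_crossing_candidates a b : a \in P ->
  (size (crossing_candidates a b) <= 25 * k ^ 2)%N.
Proof.
move=> aP; set X := (N a : seq _) ++ in_knn a ++ in_knn b.
have XP : {subset X <= P}.
  by move=> c; rewrite !mem_cat !mem_filter => /or3P[/(knn_mem aP)[]|/andP[]|/andP[]].
have sizeX : (size X <= 17 * k)%N.
  rewrite !size_cat (_ : 17 * k = k + (8 * k + 8 * k))%N; last by lia.
  by rewrite leq_add ?leq_add ?size_in_knn_le ?card_knn_le.
rewrite size_cat (_ : 25 * k ^ 2 = 17 * k * k + k * (8 * k))%N; last by lia.
apply: leq_add.
  apply: leq_trans (size_allpairs_dep_le _ (t := fun c => N c) _) (leq_mul sizeX (leqnn k)).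
  by move=> c /XP; apply: card_knn_le.
apply: leq_trans (size_allpairs_dep_le _ (t := in_knn) (m := 8 * k) _) _.
  by move=> d _; apply: size_in_knn_le.
by rewrite leq_mul ?card_knn_le.
Qed.

Lemma card_crossing_le a b (S : {fset {fset pt R}}) : a \in P -> b \in N a ->
  (forall e, e \in S -> exists c d,
     [/\ e = [fset c; d]%fset, knn_edge P N c d & seg_cross a b c d]) ->
  (#|` S| <= 25 * k ^ 2)%N.
Proof.
move=> aP bN crossS; apply: leq_trans (size_crossing_candidates b aP).
rewrite -(size_map (fun e => [fset e.1; e.2]%fset)); apply: uniq_leq_size (fset_uniq S) _.
move=> _ /crossS[c [d [-> [cP dP /orP[dN|cN]] abcd]]].
  exact: map_f (crossing_candidatesP aP bN cP dN abcd).
rewrite fsetUC; apply: (map_f _ (crossing_candidatesP aP bN dP cN _)).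
exact: seg_crossCr.
Qed.

End KnnGraph.

Local Open Scope fset_scope.

Theorem lemma37 : exists C : nat,
  forall (R : realType) (k : nat) (P : {fset pt R}) (N : pt R -> {fset pt R}),
    (1 <= k)%N -> knn_choice k P N ->
    forall a b : pt R, knn_edge P N a b ->
    forall S : {fset {fset pt R}},
      (forall e, e \in S -> exists c d : pt R,
          [/\ e = [fset c; d], knn_edge P N c d & seg_cross a b c d]) ->
      (#|` S| <= C * k ^ 2)%N.
Proof.
exists 25%N => R k P N _ knnN a b [aP bP /orP[bN|aN]] S crossS.
  by apply: (card_crossing_le knnN aP bN) => e /crossS.
apply: (card_crossing_le knnN bP aN) => e /crossS[c [d [-> cd abcd]]].
by exists c, d; split=> //; apply: seg_crossCl.
Qed.
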